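(* Let $u,v>0$ and $0<a,b\le 1$, and consider the map $(x,y)\mapsto\big((1-a)x+auy(1-y),\ (1-b)y+bvx(1-x)\big)$. Let $R_1=u^2v^2-4u^2v-4uv^2+18uv-27$. Provided $R_1\neq 0$: the map has three distinct positive equilibria if and only if $R_1>0$, and it has exactly one positive equilibrium if and only if $R_1<0$ and $uv>1$. Provided $R_1=0$: the map has two distinct positive equilibria if and only if $(u,v)\neq(3,3)$, and it has a unique positive equilibrium, namely $(2/3,2/3)$, if $(u,v)=(3,3)$.
   Context: An equilibrium of the map is a real fixed point $(x^*,y^* )$, i.e. a real solution of $x^*=uy^*(1-y^* )$, $y^*=vx^*(1-x^* )$; it is called positive if $x^*>0$ and $y^*>0$. *)

From Stdlib Require Import Reals List.
Open Scope R_scope.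

Definition F (u v a b : R) (p : R * R) : R * R :=
  ((1 - a) * fst p + a * u * snd p * (1 - snd p),
   (1 - b) * snd p + b * v * fst p * (1 - fst p)).

Definition equilibrium (u v a b : R) (p : R * R) : Prop := F u v a b p = p.

Definition pos_equilibrium (u v a b : R) (p : R * R) : Prop :=
  equilibrium u v a b p /\ 0 < fst p /\ 0 < snd p.

Definition num_pos_equilibria (u v a b : R) (n : nat) : Prop :=
  exists l : list (R * R), NoDup l /\ length l = n /\
    forall p, In p l <-> pos_equilibrium u v a b p.

Definition resR1 (u v : R) : R :=
  u^2 * v^2 - 4 * u^2 * v - 4 * u * v^2 + 18 * u * v - 27.

From Stdlib Require Import Reals List Lra Psatz.
Import ListNotations.
Open Scope R_scope.

(* Eliminating y, a positive equilibrium (x, y) is the same as a root t = 1 - x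
   in (0, 1) of the cubic P(t) = u v^2 t^3 - u v^2 t^2 + u v t - 1 ([eq_cubic u v]), with
   y = v t (1 - t).  The discriminant of P is (u v^2)^2 R1.  Since P(0) = -1, all
   real roots of P are positive, and by Vieta three of them sum to 1; so as soon
   as P has two distinct real roots, all its roots lie in (0, 1).  If R1 < 0 there
   is at most one real root, which lies in (0, 1) iff P(1) = u v - 1 > 0.  If
   R1 >= 0 and (u, v) <> (3, 3) then v > 3, P has two critical points, and the
   product of the critical values is -R1/27: for R1 > 0 the intermediate value
   theorem gives three roots, for R1 = 0 a critical point is a double root.
   For (u, v) = (3, 3), P(t) = (3 t - 1)^3. *)

Lemma pow_eq0 (x : R) (n : nat) : x ^ n = 0 -> x = 0.
Proof.
  intros e. destruct (Req_dec x 0) as [| nx]; [assumption | exfalso].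
  exact (pow_nonzero x n nx e).
Qed.

Definition has_exactly {A : Type} (n : nat) (P : A -> Prop) : Prop :=
  exists l : list A, NoDup l /\ length l = n /\ forall x, In x l <-> P x.

Section HasExactly.

Context {A : Type} (P : A -> Prop).

Lemma has_exactly_unique n m : has_exactly n P -> has_exactly m P -> n = m.
Proof.
  intros [l [nd_l [<- hl]]] [k [nd_k [<- hk]]].
  apply Nat.le_antisymm; apply NoDup_incl_length; auto;
    intros x hx; [apply hk, hl | apply hl, hk]; exact hx.
Qed.

Lemma has_exactly_0 : (forall x, ~ P x) -> has_exactly 0 P.
Proof.
  intros hP. exists []. split; [constructor | split; [reflexivity |]].
  intros x; split; [intros [] | intros hx; exact (hP x hx)].
Qed.

Lemma has_exactly_1 x : P x -> (forall y, P y -> y = x) -> has_exactly 1 P.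
Proof.
  intros hx hP. exists [x]. split; [repeat constructor; simpl; tauto | split; [reflexivity |]].
  intros y; split.
  - intros [<- | []]; exact hx.
  - intros hy; left; symmetry; apply hP, hy.
Qed.

Lemma has_exactly_2 x y : x <> y -> P x -> P y ->
  (forall z, P z -> z = x \/ z = y) -> has_exactly 2 P.
Proof.
  intros nxy hx hy hP. exists [x; y].
  split; [repeat constructor; simpl; intuition | split; [reflexivity |]]. intros z; split.
  - intros [<- | [<- | []]]; assumption.
  - intros hz; simpl; destruct (hP z hz); auto.
Qed.

Lemma has_exactly_3 x y z : x <> y -> x <> z -> y <> z -> P x -> P y -> P z ->
  (forall w, P w -> w = x \/ w = y \/ w = z) -> has_exactly 3 P.
Proof.
  intros nxy nxz nyz hx hy hz hP. exists [x; y; z].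
  split; [repeat constructor; simpl; intuition | split; [reflexivity |]]. intros w; split.
  - intros [<- | [<- | [<- | []]]]; assumption.
  - intros hw; simpl; destruct (hP w hw) as [|[|]]; auto.
Qed.

End HasExactly.

Lemma has_exactly_image {A B : Type} (f : A -> B) (g : B -> A)
    (P : A -> Prop) (Q : B -> Prop) n :
  (forall x, g (f x) = x) -> (forall y, Q y <-> exists x, P x /\ y = f x) ->
  has_exactly n Q <-> has_exactly n P.
Proof.
  intros gf hQ. split; intros [l [nd [hlen hl]]].
  - exists (map g l). split; [| split; [rewrite length_map; exact hlen |]].
    + apply NoDup_map_NoDup_ForallPairs; auto.
      intros y y' hy hy' e.
      apply hl, hQ in hy as [x [_ ->]]. apply hl, hQ in hy' as [x' [_ ->]].
      rewrite !gf in e; congruence.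
    + intros x. rewrite in_map_iff. split.
      * intros [y [<- hy]]. apply hl, hQ in hy as [x [hx ->]]. rewrite gf; exact hx.
      * intros hx. exists (f x). split; [apply gf | apply hl, hQ; eauto].
  - exists (map f l). split; [| split; [rewrite length_map; exact hlen |]].
    + apply NoDup_map_NoDup_ForallPairs; auto.
      intros x x' _ _ e. rewrite <- (gf x), <- (gf x'), e; reflexivity.
    + intros y. rewrite in_map_iff. split.
      * intros [x [<- hx]]. apply hQ. exists x; split; [apply hl, hx | reflexivity].
      * intros hy. apply hQ in hy as [x [hx ->]].
        exists x; split; [reflexivity | apply hl, hx].
Qed.

Section Cubic.

Variables a b c d : R.

Definition cubic (t : R) : R := a * t^3 + b * t^2 + c * t + d.

Definition cubic_deriv (t : R) : R := 3 * a * t^2 + 2 * b * t + c.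

Definition cubic_disc : R :=
  18 * a * b * c * d - 4 * b^3 * d + b^2 * c^2 - 4 * a * c^3 - 27 * a^2 * d^2.

Lemma continuity_cubic : continuity cubic.
Proof. unfold cubic; reg. Qed.

Hypothesis a_neq0 : a <> 0.

Section Roots.

Variables r1 r2 r3 : R.
Hypothesis root_r1 : cubic r1 = 0.
Hypothesis root_r2 : cubic r2 = 0.
Hypothesis r1_neq_r2 : r1 <> r2.
Hypothesis b_roots : b = - a * (r1 + r2 + r3).

Lemma cubic_vieta :
  c = a * (r1 * r2 + r1 * r3 + r2 * r3) /\ d = - a * (r1 * r2 * r3).
Proof.
  set (alpha := c - a * (r1 * r2 + r1 * r3 + r2 * r3)).
  set (beta := d + a * (r1 * r2 * r3)).
  assert (rem : forall t, cubic t = a * (t - r1) * (t - r2) * (t - r3) + alpha * t + beta).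
  { intros t. unfold cubic, alpha, beta. rewrite b_roots. ring. }
  assert (e1 : alpha * r1 + beta = 0) by (rewrite <- root_r1, rem; ring).
  assert (e2 : alpha * r2 + beta = 0) by (rewrite <- root_r2, rem; ring).
  assert (alpha0 : alpha = 0).
  { assert (e : alpha * (r1 - r2) = 0) by lra.
    apply Rmult_integral in e as [e | e]; [exact e | lra]. }
  assert (beta0 : beta = 0) by (rewrite alpha0 in e1; lra).
  unfold alpha, beta in *. split; lra.
Qed.

Lemma cubic_factor t : cubic t = a * (t - r1) * (t - r2) * (t - r3).
Proof.
  destruct cubic_vieta as [hc hd]. unfold cubic. rewrite b_roots, hc, hd. ring.
Qed.

Lemma cubic_root_r3 : cubic r3 = 0.
Proof. rewrite cubic_factor. ring. Qed.

Lemma cubic_root_cases t : cubic t = 0 -> t = r1 \/ t = r2 \/ t = r3.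
Proof.
  rewrite cubic_factor. intros e.
  apply Rmult_integral in e as [e | e3]; [| right; right; lra].
  apply Rmult_integral in e as [e | e2]; [| right; left; lra].
  apply Rmult_integral in e as [e | e1]; [contradiction | left; lra].
Qed.

Lemma cubic_disc_roots :
  cubic_disc = a^4 * ((r1 - r2) * (r1 - r3) * (r2 - r3))^2.
Proof.
  destruct cubic_vieta as [hc hd]. unfold cubic_disc. rewrite b_roots, hc, hd. ring.
Qed.

End Roots.

Lemma cubic_double_root r r3 :
  b = - a * (2 * r + r3) -> cubic r = 0 -> cubic_deriv r = 0 ->
  forall t, cubic t = a * (t - r)^2 * (t - r3).
Proof.
  intros hb hr hr' t.
  (* Taylor expansion at r *)
  transitivity (a * (t - r)^2 * (t - r3) + cubic_deriv r * (t - r) + cubic r).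
  - unfold cubic_deriv, cubic. rewrite hb. ring.
  - rewrite hr, hr'. ring.
Qed.

Section CriticalPoints.

Variables c1 c2 : R.
Hypothesis b_crit : b = - 3 * a * (c1 + c2) / 2.
Hypothesis c_crit : c = 3 * a * c1 * c2.

Lemma cubic_deriv_factor t : cubic_deriv t = 3 * a * (t - c1) * (t - c2).
Proof. unfold cubic_deriv. rewrite b_crit, c_crit. field. Qed.

Lemma cubic_crit_values_mul : cubic c1 * cubic c2 = - cubic_disc / (27 * a^2).
Proof. unfold cubic, cubic_disc. rewrite b_crit, c_crit. field. exact a_neq0. Qed.

Lemma cubic_crit_values_sub : cubic c1 - cubic c2 = a * (c2 - c1)^3 / 2.
Proof. unfold cubic. rewrite b_crit, c_crit. field. Qed.

End CriticalPoints.

End Cubic.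

Definition eq_cubic (u v : R) : R -> R := cubic (u * v^2) (- (u * v^2)) (u * v) (-1).

Definition unit_root (u v t : R) : Prop := 0 < t < 1 /\ eq_cubic u v t = 0.

Lemma eq_cubic_spec u v t :
  u * (v * t * (1 - t)) * (1 - v * t * (1 - t)) = (1 - t) * (eq_cubic u v t + 1).
Proof. unfold eq_cubic, cubic. ring. Qed.

Lemma cubic_disc_eq_cubic u v :
  cubic_disc (u * v^2) (- (u * v^2)) (u * v) (-1) = (u * v^2)^2 * resR1 u v.
Proof. unfold cubic_disc, resR1. ring. Qed.

Lemma equilibrium_iff u v a b x y : a <> 0 -> b <> 0 ->
  equilibrium u v a b (x, y) <-> x = u * y * (1 - y) /\ y = v * x * (1 - x).
Proof.
  intros ha hb. unfold equilibrium, F; simpl. split.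
  - intros e. injection e as ex ey.
    assert (ex' : a * (u * y * (1 - y) - x) = 0) by lra.
    assert (ey' : b * (v * x * (1 - x) - y) = 0) by lra.
    apply Rmult_integral in ex' as [| ex']; [contradiction |].
    apply Rmult_integral in ey' as [| ey']; [contradiction |].
    split; lra.
  - intros [ex ey]. f_equal; [rewrite ex | rewrite ey]; ring.
Qed.

Lemma lt1_of_logistic_pos k y : 0 < k -> 0 < y -> 0 < k * y * (1 - y) -> y < 1.
Proof.
  intros hk hy h. destruct (Rlt_or_le y 1) as [| hy1]; [assumption | exfalso].
  pose proof (Rmult_lt_0_compat k y hk hy). nra.
Qed.

Lemma pos_equilibrium_iff u v a b p : 0 < u -> 0 < v -> a <> 0 -> b <> 0 ->
  pos_equilibrium u v a b p <->
  exists t, unit_root u v t /\ p = (1 - t, v * t * (1 - t)).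
Proof.
  intros hu hv ha hb. destruct p as [x y].
  unfold pos_equilibrium. rewrite equilibrium_iff by assumption. simpl. split.
  - intros [[ex ey] [hx hy]].
    assert (hy1 : y < 1) by (apply (lt1_of_logistic_pos u); lra).
    assert (hx1 : x < 1) by (apply (lt1_of_logistic_pos v); lra).
    exists (1 - x). split; [split; [lra |] | f_equal; [ring | rewrite ey; ring]].
    assert (e : x * eq_cubic u v (1 - x) = 0).
    { transitivity (u * y * (1 - y) - x); [rewrite ey; unfold eq_cubic, cubic; ring | lra]. }
    apply Rmult_integral in e as [|]; [lra | assumption].
  - intros [t [[ht et] e]]. injection e as -> ->.
    pose proof (eq_cubic_spec u v t) as es. rewrite et in es.
    repeat split; [lra | ring | lra |].
    apply Rmult_lt_0_compat; [nra | lra].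
Qed.

Section EquilibriumCubic.

Variables u v : R.
Hypothesis u_pos : 0 < u.
Hypothesis v_pos : 0 < v.

Let lead_pos : 0 < u * v^2.
Proof. apply Rmult_lt_0_compat, pow_lt; assumption. Qed.

Lemma eq_cubic_root_pos t : eq_cubic u v t = 0 -> 0 < t.
Proof.
  intros e. destruct (Rlt_or_le 0 t) as [| ht]; [assumption | exfalso].
  unfold eq_cubic, cubic in e.
  assert (0 <= u * v^2 * t^2 * (1 - t)) by (apply Rmult_le_pos; nra).
  assert (0 <= u * v * (- t)) by (apply Rmult_le_pos; nra).
  lra.
Qed.

Lemma unit_root_uv_gt1 t : unit_root u v t -> 1 < u * v.
Proof.
  intros [ht e]. destruct (Rlt_or_le 1 (u * v)) as [| huv]; [assumption | exfalso].
  assert (e' : u * v * t * (1 - v * t * (1 - t)) = 1)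
    by (unfold eq_cubic, cubic in e; lra).
  assert (0 < v * t * (1 - t)) by (apply Rmult_lt_0_compat; nra).
  assert (0 < u * v * t < 1) by nra.
  nra.
Qed.

Lemma eq_cubic_no_unit_root : u * v <= 1 -> has_exactly 0 (unit_root u v).
Proof.
  intros huv. apply has_exactly_0. intros t ht.
  pose proof (unit_root_uv_gt1 t ht). lra.
Qed.

Section TwoRoots.

Variables r1 r2 : R.
Hypothesis root_r1 : eq_cubic u v r1 = 0.
Hypothesis root_r2 : eq_cubic u v r2 = 0.
Hypothesis r1_neq_r2 : r1 <> r2.

Let lead_roots : - (u * v^2) = - (u * v^2) * (r1 + r2 + (1 - r1 - r2)).
Proof. ring. Qed.

Lemma eq_cubic_root_cases t :
  eq_cubic u v t = 0 -> t = r1 \/ t = r2 \/ t = 1 - r1 - r2.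
Proof.
  apply (cubic_root_cases _ _ _ _ (Rgt_not_eq _ _ lead_pos) _ _ _
           root_r1 root_r2 r1_neq_r2 lead_roots).
Qed.

Lemma unit_roots_of_two :
  unit_root u v r1 /\ unit_root u v r2 /\ unit_root u v (1 - r1 - r2).
Proof.
  assert (root_r3 : eq_cubic u v (1 - r1 - r2) = 0)
    by exact (cubic_root_r3 _ _ _ _ _ _ _ root_r1 root_r2 r1_neq_r2 lead_roots).
  pose proof (eq_cubic_root_pos r1 root_r1).
  pose proof (eq_cubic_root_pos r2 root_r2).
  pose proof (eq_cubic_root_pos _ root_r3).
  unfold unit_root. repeat split; auto; lra.
Qed.

Lemma resR1_roots : resR1 u v =
  (u * v^2)^2 * ((r1 - r2) * (r1 - (1 - r1 - r2)) * (r2 - (1 - r1 - r2)))^2.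
Proof.
  pose proof (cubic_disc_roots _ _ _ _ _ _ _ root_r1 root_r2 r1_neq_r2 lead_roots) as e.
  rewrite cubic_disc_eq_cubic in e.
  apply Rmult_eq_reg_l with ((u * v^2)^2);
    [rewrite e; ring | apply pow_nonzero, Rgt_not_eq, lead_pos].
Qed.

Lemma resR1_neq0_roots_distinct :
  resR1 u v <> 0 -> r1 <> 1 - r1 - r2 /\ r2 <> 1 - r1 - r2.
Proof.
  rewrite resR1_roots. intros hR. split; intros e; apply hR; rewrite <- e; ring.
Qed.

End TwoRoots.

Lemma eq_cubic_unique_unit_root : resR1 u v < 0 -> 1 < u * v ->
  has_exactly 1 (unit_root u v).
Proof.
  intros hR huv.
  destruct (IVT (eq_cubic u v) 0 1) as [r [hr er]];
    [apply continuity_cubic | lra | unfold eq_cubic, cubic; lra .. |].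
  assert (unit_r : unit_root u v r).
  { split; [split |]; [destruct hr as [[| <-] _] | destruct hr as [_ [| ->]] |];
      unfold eq_cubic, cubic in *; lra. }
  apply (has_exactly_1 _ r unit_r). intros t [_ et].
  destruct (Req_dec t r) as [| ntr]; [assumption | exfalso].
  pose proof (resR1_roots t r et er ntr) as e.
  assert (0 <= resR1 u v) by (rewrite e; apply Rmult_le_pos; apply pow2_ge_0).
  lra.
Qed.

Lemma resR1_nonneg_v_gt3 : 0 <= resR1 u v -> (u, v) <> (3, 3) -> 3 < v.
Proof.
  intros hR n33. destruct (Rlt_or_le 3 v) as [| hv3]; [assumption | exfalso].
  set (w := v^2 - 4 * v).
  assert (hw : w < 0) by (unfold w; nra).
  assert (sos : - (4 * w) * resR1 u v + (2 * w * u + 18 * v - 4 * v^2)^2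
                + 16 * v * (3 - v)^3 = 0)
    by (unfold w, resR1; ring).
  assert (0 <= - (4 * w) * resR1 u v) by (apply Rmult_le_pos; lra).
  assert (0 <= (2 * w * u + 18 * v - 4 * v^2)^2) by apply pow2_ge_0.
  assert (0 <= 16 * v * (3 - v)^3) by (apply Rmult_le_pos; [lra | apply pow_le; lra]).
  assert (sq0 : (2 * w * u + 18 * v - 4 * v^2)^2 = 0) by lra.
  assert (cube0 : 16 * v * (3 - v)^3 = 0) by lra.
  apply Rmult_integral in cube0 as [| cube0]; [lra |].
  assert (v = 3) as -> by (apply pow_eq0 in cube0; lra).
  apply pow_eq0 in sq0. unfold w in sq0.
  apply n33. f_equal. lra.
Qed.

Lemma eq_cubic_critical_points : 3 < v ->
  exists c1 c2, 0 < c1 < c2 /\ c1 + c2 = 2 / 3 /\ u * v = 3 * (u * v^2) * c1 * c2.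
Proof.
  intros hv3.
  assert (h : 0 < 3 / v < 1).
  { split; [apply Rdiv_lt_0_compat; lra |].
    apply (Rmult_lt_reg_r v); [lra |]. field_simplify; lra. }
  set (s := sqrt (1 - 3 / v)).
  assert (s2 : s * s = 1 - 3 / v) by (apply sqrt_sqrt; lra).
  assert (s_pos : 0 < s) by (apply sqrt_lt_R0; lra).
  exists ((1 - s) / 3), ((1 + s) / 3). repeat split; [nra | lra | field |].
  transitivity (u * v^2 * (1 - s * s) / 3); [rewrite s2; field; lra | field].
Qed.

Lemma eq_cubic_crit_values_mul c1 c2 :
  - (u * v^2) = - 3 * (u * v^2) * (c1 + c2) / 2 -> u * v = 3 * (u * v^2) * c1 * c2 ->
  eq_cubic u v c1 * eq_cubic u v c2 = - resR1 u v / 27.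
Proof.
  intros hb hc. unfold eq_cubic.
  rewrite (cubic_crit_values_mul _ _ _ _ (Rgt_not_eq _ _ lead_pos) _ _ hb hc).
  rewrite cubic_disc_eq_cubic. field. split; apply Rgt_not_eq; assumption.
Qed.

Lemma eq_cubic_three_unit_roots : 0 < resR1 u v -> has_exactly 3 (unit_root u v).
Proof.
  intros hR.
  assert (hv3 : 3 < v).
  { apply resR1_nonneg_v_gt3; [lra |]. intros e. injection e as -> ->.
    unfold resR1 in hR. lra. }
  destruct (eq_cubic_critical_points hv3) as [c1 [c2 [[c1_pos c12] [hsum hc]]]].
  assert (hb : - (u * v^2) = - 3 * (u * v^2) * (c1 + c2) / 2) by (rewrite hsum; field).
  pose proof (eq_cubic_crit_values_mul c1 c2 hb hc) as hmul.
  assert (hsub : eq_cubic u v c2 < eq_cubic u v c1).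
  { assert (0 < u * v^2 * (c2 - c1)^3 / 2)
      by (apply Rdiv_lt_0_compat; [apply Rmult_lt_0_compat, pow_lt |]; lra).
    pose proof (cubic_crit_values_sub _ _ _ (-1) _ _ hb hc). unfold eq_cubic. lra. }
  assert (max_pos : 0 < eq_cubic u v c1).
  { destruct (Rlt_or_le 0 (eq_cubic u v c1)) as [| hle]; [assumption | exfalso].
    assert (0 <= eq_cubic u v c1 * eq_cubic u v c2).
    { replace (eq_cubic u v c1 * eq_cubic u v c2)
        with ((- eq_cubic u v c1) * (- eq_cubic u v c2)) by ring.
      apply Rmult_le_pos; lra. }
    lra. }
  destruct (IVT (eq_cubic u v) 0 c1) as [r1 [hr1 e1]];
    [apply continuity_cubic | lra | unfold eq_cubic, cubic; lra | assumption |].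
  destruct (IVT_cor (eq_cubic u v) c1 c2) as [r2 [hr2 e2]];
    [apply continuity_cubic | lra | lra |].
  assert (r12 : r1 <> r2) by (destruct hr1 as [_ [| ->]]; lra).
  destruct (unit_roots_of_two r1 r2 e1 e2 r12) as [u1 [u2 u3]].
  destruct (resR1_neq0_roots_distinct r1 r2 e1 e2 r12 ltac:(lra)) as [n13 n23].
  apply (has_exactly_3 _ r1 r2 (1 - r1 - r2)); try assumption.
  intros t [_ et]. exact (eq_cubic_root_cases r1 r2 e1 e2 r12 t et).
Qed.

Lemma eq_cubic_two_unit_roots : resR1 u v = 0 -> (u, v) <> (3, 3) ->
  has_exactly 2 (unit_root u v).
Proof.
  intros hR n33.
  destruct (eq_cubic_critical_points (resR1_nonneg_v_gt3 ltac:(lra) n33))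
    as [c1 [c2 [[c1_pos c12] [hsum hc]]]].
  assert (hb : - (u * v^2) = - 3 * (u * v^2) * (c1 + c2) / 2) by (rewrite hsum; field).
  assert (double : forall r, eq_cubic u v r = 0 -> (r = c1 \/ r = c2) ->
    has_exactly 2 (unit_root u v)).
  { intros r er hr.
    assert (er' : cubic_deriv (u * v^2) (- (u * v^2)) (u * v) r = 0).
    { rewrite (cubic_deriv_factor _ _ _ _ _ hb hc). destruct hr as [-> | ->]; ring. }
    assert (hr3 : - (u * v^2) = - (u * v^2) * (2 * r + (1 - 2 * r))) by ring.
    pose proof (cubic_double_root _ _ _ _ _ _ hr3 er er') as fact.
    assert (nr : r <> 1 - 2 * r) by (destruct hr; lra).
    assert (er3 : eq_cubic u v (1 - 2 * r) = 0) by (unfold eq_cubic; rewrite fact; ring).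
    destruct (unit_roots_of_two r (1 - 2 * r) er er3 nr) as [u1 [u2 _]].
    apply (has_exactly_2 _ r (1 - 2 * r)); auto.
    intros t [_ et]. unfold eq_cubic in et. rewrite fact in et.
    apply Rmult_integral in et as [et | et]; [| right; lra].
    apply Rmult_integral in et as [et | et]; [lra | left].
    apply pow_eq0 in et. lra. }
  assert (hmul0 : eq_cubic u v c1 * eq_cubic u v c2 = 0)
    by (rewrite (eq_cubic_crit_values_mul c1 c2 hb hc), hR; field).
  apply Rmult_integral in hmul0 as [e | e]; eapply double; eauto.
Qed.

End EquilibriumCubic.

Lemma unit_root_33 t : unit_root 3 3 t <-> t = 1 / 3.
Proof.
  assert (cube : eq_cubic 3 3 t = (3 * t - 1)^3) by (unfold eq_cubic, cubic; ring).
  unfold unit_root. rewrite cube. split.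
  - intros [_ e]. apply pow_eq0 in e. lra.
  - intros ->. split; [lra | field].
Qed.

Lemma unique_unit_root_33 : has_exactly 1 (unit_root 3 3).
Proof.
  apply (has_exactly_1 _ (1 / 3)); [apply unit_root_33; reflexivity |].
  intros t; apply unit_root_33.
Qed.

Theorem theorem1 (u v a b : R) (hu : 0 < u) (hv : 0 < v)
  (ha : 0 < a <= 1) (hb : 0 < b <= 1) :
  (resR1 u v <> 0 ->
     (num_pos_equilibria u v a b 3 <-> 0 < resR1 u v) /\
     (num_pos_equilibria u v a b 1 <-> resR1 u v < 0 /\ 1 < u * v)) /\
  (resR1 u v = 0 ->
     (num_pos_equilibria u v a b 2 <-> (u, v) <> (3, 3)) /\
     ((u, v) = (3, 3) ->
        forall p, pos_equilibrium u v a b p <-> p = (2/3, 2/3))).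
Proof.
  assert (pos_eq : forall p, pos_equilibrium u v a b p <->
            exists t, unit_root u v t /\ p = (1 - t, v * t * (1 - t)))
    by (intros; apply pos_equilibrium_iff; lra).
  assert (count : forall n,
            num_pos_equilibria u v a b n <-> has_exactly n (unit_root u v)).
  { intros n. apply (has_exactly_image (fun t => (1 - t, v * t * (1 - t))) (fun p => 1 - fst p)).
    - intros t; simpl; ring.
    - exact pos_eq. }
  pose proof (has_exactly_unique (unit_root u v)) as card.
  pose proof (eq_cubic_no_unit_root u v hu hv) as N0.
  pose proof (eq_cubic_unique_unit_root u v hu hv) as N1.
  pose proof (eq_cubic_two_unit_roots u v hu hv) as N2.
  pose proof (eq_cubic_three_unit_roots u v hu hv) as N3.
  rewrite !count. split; intros hR; split.
  - split; [intros h3 | exact N3].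
    destruct (Rle_or_lt (u * v) 1) as [huv | huv]; [discriminate (card _ _ h3 (N0 huv)) |].
    destruct (Rlt_or_le 0 (resR1 u v)) as [| hR']; [assumption |].
    discriminate (card _ _ h3 (N1 ltac:(lra) huv)).
  - split; [intros h1 | intros [hR' huv]; exact (N1 hR' huv)].
    destruct (Rle_or_lt (u * v) 1) as [huv | huv]; [discriminate (card _ _ h1 (N0 huv)) |].
    destruct (Rlt_or_le 0 (resR1 u v)) as [hR' | hR']; [discriminate (card _ _ h1 (N3 hR')) |].
    split; lra.
  - split; [intros h2 e | exact (N2 hR)].
    injection e as -> ->.
    discriminate (card _ _ h2 unique_unit_root_33).
  - intros e p. injection e as -> ->. rewrite pos_eq. setoid_rewrite unit_root_33. split.
    + intros [t [-> ->]]. f_equal; field.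
    + intros ->. exists (1 / 3). split; [reflexivity | f_equal; field].
Qed.
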